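(* Let $h_1,h_2\in\mathbb{C}\setminus\{0\}$ with $|h_1|>|h_2|$, deadlines $D_1<D_2$, minimum blocklength $\hat m>0$, power budget $P_{\max}>0$, packet sizes $N_1,N_2>0$ and error probabilities $\epsilon_1,\epsilon_2\in(0,1)$. For $k=1,2$ define, for $m>0,\gamma>0$, $$F_k(m,\gamma)=\sqrt{\frac{1}{m}\left(1-\frac{1}{(\gamma+1)^2}\right)}\,\frac{Q^{-1}(\epsilon_k)}{\ln 2}-\log_2(1+\gamma)+\frac{N_k}{m},$$ and let $\Gamma_k(m)$ denote the implicit function defined by $F_k(m,\Gamma_k(m))=0$, $\Gamma_k(m)>0$. Consider the problem $$\min_{\{m_k,p_k,\gamma_k\}_{k=1,2}} m_1p_1+m_2p_2$$ subject to $F_k(m_k,\gamma_k)=0$, $\hat m\le m_k\le D_k$, $p_k\ge0$ for $k=1,2$, $p_1+p_2\le P_{\max}$, $\gamma_1=\frac{p_1|h_1|^2}{p_2|h_1|^2+1}$, $\gamma_2=\frac{p_2|h_2|^2}{p_1|h_2|^2+1}$. If $\frac{Q^{-1}(\epsilon_k)}{\sqrt{N_k}}\le \frac{2\sqrt{\ln 2}}{4-\sqrt2}=0.64394\ldots$ for $k=1,2$ and the problem is feasible, then an optimal solution is $$m_k^*=D_k,\quad \gamma_k^*=\Gamma_k(D_k)\ (k=1,2),$$ $$p_1^*=\frac{\gamma_1^*|h_2|^2+\gamma_1^*\gamma_2^*|h_1|^2}{|h_1|^2|h_2|^2(1-\gamma_1^*\gamma_2^* )},\quad p_2^*=\frac{\gamma_2^*|h_1|^2+\gamma_1^*\gamma_2^*|h_2|^2}{|h_1|^2|h_2|^2(1-\gamma_1^*\gamma_2^*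 )}.$$
   Context: $Q^{-1}$ is the inverse of the Gaussian Q-function. The setting is a two-user single-antenna downlink with superposition coding and unit noise variances, in which both receivers treat the other receiver's signal as noise. Blocklengths $m_k$ are treated as continuous variables. The constraint $F_k(m_k,\gamma_k)=0$ is the finite-blocklength rate relation $\frac{N_k}{m_k}=\log_2(1+\gamma_k)-\sqrt{\frac{1}{m_k}\big(1-\frac{1}{(1+\gamma_k)^2}\big)}\frac{Q^{-1}(\epsilon_k)}{\ln2}$. *)

From Stdlib Require Import Reals ClassicalEpsilon.
From Coquelicot Require Import Coquelicot.
Open Scope R_scope.

Definition Qfun (x : R) : R :=
  / sqrt (2 * PI) *
  RInt_gen (fun t => exp (- (t ^ 2) / 2)) (at_point x) (Rbar_locally p_infty).

Definition Qinv (eps : R) : R :=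
  epsilon (inhabits 0) (fun q => Qfun q = eps).

Definition log2 (x : R) : R := ln x / ln 2.

Definition Ffun (eps N m g : R) : R :=
  sqrt (/ m * (1 - / (g + 1) ^ 2)) * Qinv eps / ln 2
  - log2 (1 + g) + N / m.

Definition Gam (eps N m : R) : R :=
  epsilon (inhabits 0) (fun g => 0 < g /\ Ffun eps N m g = 0).

(* Feasible set of the optimization problem; a1 = |h1|^2, a2 = |h2|^2 *)
Definition feasible (a1 a2 D1 D2 mhat Pmax N1 N2 eps1 eps2 : R)
  (m1 m2 p1 p2 g1 g2 : R) : Prop :=
  Ffun eps1 N1 m1 g1 = 0 /\ Ffun eps2 N2 m2 g2 = 0 /\
  mhat <= m1 <= D1 /\ mhat <= m2 <= D2 /\
  0 <= p1 /\ 0 <= p2 /\ p1 + p2 <= Pmax /\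
  g1 = p1 * a1 / (p2 * a1 + 1) /\
  g2 = p2 * a2 / (p1 * a2 + 1).

Definition objective (m1 m2 p1 p2 : R) : R := m1 * p1 + m2 * p2.

From Stdlib Require Import Reals Lra Psatz ClassicalEpsilon.
From Coquelicot Require Import Coquelicot.
Open Scope R_scope.

(* Put c = Q^{-1}(eps) / ln 2, V(g) = 1 - 1/(g+1)^2 (the channel dispersion) and
   W(g) = sqrt (c^2 V(g) + 4 N log2(1+g)) - c sqrt V(g).  In s = sqrt m the rate
   constraint F(m, g) = 0 is a quadratic whose positive root gives sqrt m * W(g) = 2 N.
   W is increasing, so the SINR a user needs decreases with its blocklength.  Also
   W(g) = sqrt g * E(g) with E decreasing once 3 c^2 ln 2 <= 2 N, which the threshold
   on Q^{-1}(eps) / sqrt N guarantees, so m g decreases too.  Hence m_k = D_k gives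
   the smallest g_k and the smallest m_k g_k.  Solving the two SINR equations gives
   p_1 = g_1 (a_2 + g_2 a_1) / (a_1 a_2 (1 - g_1 g_2)) with a_k = |h_k|^2.  This is
   increasing in g_1 and g_2, so the point m_k = D_k uses no more total power than any
   feasible point and has the smallest m_k p_k. *)

Lemma ln2_pos : 0 < ln 2.
Proof. pose proof ln_lt_2; lra. Qed.

Lemma ln_1p_pos x : 0 < x -> 0 < ln (1 + x).
Proof. intros Hx. rewrite <- ln_1. apply ln_increasing; lra. Qed.

Lemma ln_1p_le x : -1 < x -> ln (1 + x) <= x.
Proof. intros Hx. rewrite <- (ln_exp x) at 2. apply ln_le; [lra | apply exp_ineq1_le]. Qed.

Lemma is_derive_continuous (f : R -> R) x l : is_derive f x l -> continuous f x.
Proof. intros Hf. apply (ex_derive_continuous (V := R_NormedModule)). now exists l. Qed.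

Lemma ln_1p_ge x : 0 <= x -> 2 * x / (2 + x) <= ln (1 + x).
Proof.
  intros Hx.
  set (h := fun y => ln (1 + y) - 2 * y / (2 + y)).
  assert (Hh : forall y, 0 <= y -> is_derive h y (y ^ 2 / ((1 + y) * (2 + y) ^ 2))).
  { intros y Hy. unfold h. auto_derive; [lra | field; lra]. }
  destruct (MVT_gen h 0 x (fun y => y ^ 2 / ((1 + y) * (2 + y) ^ 2))) as [c [Hc Hmvt]];
    rewrite Rmin_left, Rmax_right in * by lra.
  - intros y Hy. apply Hh. lra.
  - intros y Hy. apply continuity_pt_filterlim, (is_derive_continuous _ _ _ (Hh y ltac:(lra))).
  - assert (0 <= c ^ 2 / ((1 + c) * (2 + c) ^ 2)).
    { apply Rle_mult_inv_pos; [nra |]. apply Rmult_lt_0_compat; [lra | apply pow_lt; lra]. }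
    unfold h in Hmvt. rewrite Rplus_0_r, ln_1 in Hmvt.
    replace (2 * 0 / (2 + 0)) with 0 in Hmvt by field.
    nra.
Qed.

Definition rate_gap (c N u v : R) : R := sqrt (c ^ 2 * u + 4 * N * v) - c * sqrt u.

Definition rate_gap_slope (c N u v du dv : R) : R :=
  (c ^ 2 * du + 4 * N * dv) / (2 * sqrt (c ^ 2 * u + 4 * N * v)) - c * (du / (2 * sqrt u)).

Lemma rate_gap_scale c N t u v :
  0 <= t -> rate_gap c N (t * u) (t * v) = sqrt t * rate_gap c N u v.
Proof.
  intros Ht. unfold rate_gap.
  replace (c ^ 2 * (t * u) + 4 * N * (t * v)) with (t * (c ^ 2 * u + 4 * N * v)) by ring.
  rewrite !sqrt_mult_alt by exact Ht. ring.
Qed.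

Lemma is_derive_rate_gap c N (u v : R -> R) x du dv :
  is_derive u x du -> is_derive v x dv -> 0 < u x -> 0 < c ^ 2 * u x + 4 * N * v x ->
  is_derive (fun y => rate_gap c N (u y) (v y)) x (rate_gap_slope c N (u x) (v x) du dv).
Proof.
  intros Hu Hv Hux Hs.
  apply (is_derive_minus (fun y => sqrt (c ^ 2 * u y + 4 * N * v y)) (fun y => c * sqrt (u y))).
  - apply (is_derive_sqrt (fun y => c ^ 2 * u y + 4 * N * v y)); [| exact Hs].
    apply (is_derive_plus (fun y => c ^ 2 * u y) (fun y => 4 * N * v y));
      now apply is_derive_scal.
  - apply is_derive_scal. now apply is_derive_sqrt.
Qed.

Lemma rate_gap_slope_opp c N u v du dv :
  rate_gap_slope c N u v (- du) (- dv) = - rate_gap_slope c N u v du dv.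
Proof. unfold rate_gap_slope, Rdiv. ring. Qed.

Lemma rate_gap_slope_pos c N u v du dv :
  0 < N -> 0 < u -> 0 < v -> 0 < du -> 0 < dv ->
  (0 < c -> 0 < c ^ 2 * du * (2 * dv * u - du * v) + 4 * N * dv ^ 2 * u) ->
  0 < rate_gap_slope c N u v du dv.
Proof.
  intros HN Hu Hv Hdu Hdv HK.
  assert (Hr : 0 < c ^ 2 * u + 4 * N * v) by nra.
  unfold rate_gap_slope.
  set (S := sqrt (c ^ 2 * u + 4 * N * v)); set (su := sqrt u).
  assert (HS : 0 < S) by (apply sqrt_lt_R0; exact Hr).
  assert (Hsu : 0 < su) by (apply sqrt_lt_R0; exact Hu).
  assert (HS2 : S * S = c ^ 2 * u + 4 * N * v) by (apply sqrt_sqrt; lra).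
  assert (Hsu2 : su * su = u) by (apply sqrt_sqrt; lra).
  set (X := (c ^ 2 * du + 4 * N * dv) * su); set (Y := c * du * S).
  assert (HX : 0 < X).
  { unfold X. apply Rmult_lt_0_compat; [pose proof (pow2_ge_0 c); nra | exact Hsu]. }
  assert (HYX : Y < X).
  { destruct (Rle_or_lt c 0) as [Hc | Hc].
    { unfold Y. assert (0 <= - c * du * S) by (apply Rmult_le_pos; nra). lra. }
    assert (HXY : X * X - Y * Y
                  = 4 * N * (c ^ 2 * du * (2 * dv * u - du * v) + 4 * N * dv ^ 2 * u)).
    { unfold X, Y.
      replace (_ - _) with ((c ^ 2 * du + 4 * N * dv) ^ 2 * (su * su) - (c * du) ^ 2 * (S * S))
        by ring.
      rewrite HS2, Hsu2. ring. }
    specialize (HK Hc). assert (0 < Y) by (unfold Y; repeat apply Rmult_lt_0_compat; lra).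
    nra. }
  replace ((c ^ 2 * du + 4 * N * dv) / (2 * S) - c * (du / (2 * su)))
    with ((X - Y) / (2 * S * su)) by (unfold X, Y; field; lra).
  apply Rdiv_lt_0_compat; nra.
Qed.

Lemma rate_gap_root_iff c N u v s :
  0 < N -> 0 < u -> 0 < v -> 0 < s ->
  c * sqrt u / s - v + N / (s * s) = 0 <-> s * rate_gap c N u v = 2 * N.
Proof.
  intros HN Hu Hv Hs. unfold rate_gap.
  assert (Hr : 0 < c ^ 2 * u + 4 * N * v) by nra.
  set (S := sqrt (c ^ 2 * u + 4 * N * v)); set (su := sqrt u).
  assert (HS : 0 < S) by (apply sqrt_lt_R0; exact Hr).
  assert (HS2 : S * S = c ^ 2 * u + 4 * N * v) by (apply sqrt_sqrt; lra).
  assert (Hsu2 : su * su = u) by (apply sqrt_sqrt; lra).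
  assert (Hconj : (S - c * su) * (S + c * su) = 4 * N * v).
  { replace (_ * _) with (S * S - c ^ 2 * (su * su)) by ring. rewrite HS2, Hsu2. ring. }
  assert (Hpos : 0 < S - c * su /\ 0 < S + c * su) by (split; nra).
  assert (Hquad : 4 * v * (v * s * s - c * su * s - N)
                  = (2 * v * s - c * su - S) * (2 * v * s - c * su + S))
    by (replace ((2 * v * s - c * su - S) * (2 * v * s - c * su + S))
          with ((2 * v * s - c * su) ^ 2 - S * S) by ring;
        rewrite HS2, <- Hsu2; ring).
  replace (c * su / s - v + N / (s * s)) with (- (v * s * s - c * su * s - N) / (s * s))
    by (field; lra).
  assert (Hvs : 0 < v * s) by nra.
  split; intros H.
  - assert (Hq : v * s * s - c * su * s - N = 0).
    { apply Rmult_integral in H as [H | H]; [lra |].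
      exfalso. revert H. apply Rinv_neq_0_compat. nra. }
    assert (Hroot : 2 * v * s - c * su - S = 0).
    { rewrite Hq, Rmult_0_r in Hquad. symmetry in Hquad.
      apply Rmult_integral in Hquad as [Hr0 | Hr0]; lra. }
    apply (Rmult_eq_reg_r (S + c * su)); [| lra].
    rewrite Rmult_assoc, Hconj. nra.
  - assert (Hroot : 2 * N * (2 * v * s - c * su - S) = 0).
    { replace (2 * N * (2 * v * s - c * su - S))
        with (s * ((S - c * su) * (S + c * su)) - 2 * N * (S + c * su))
        by (rewrite Hconj; ring).
      rewrite <- Rmult_assoc, H. ring. }
    assert (Hq : v * s * s - c * su * s - N = 0).
    { apply Rmult_integral in Hroot as [Hr0 | Hr0]; [lra |].
      rewrite Hr0, Rmult_0_l in Hquad.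
      apply Rmult_integral in Hquad as [Hr1 | Hr1]; lra. }
    rewrite Hq. unfold Rdiv. ring.
Qed.

Definition dispersion (g : R) : R := 1 - / (g + 1) ^ 2.

Definition Wgap (c N g : R) : R := rate_gap c N (dispersion g) (log2 (1 + g)).

Definition Egap (c N g : R) : R := rate_gap c N (dispersion g / g) (log2 (1 + g) / g).

Lemma dispersion_eq g : -1 < g -> dispersion g = g * (g + 2) / (g + 1) ^ 2.
Proof. intros Hg. unfold dispersion. field. lra. Qed.

Lemma dispersion_pos g : 0 < g -> 0 < dispersion g.
Proof.
  intros Hg. rewrite dispersion_eq by lra.
  apply Rdiv_lt_0_compat; [nra | apply pow_lt; lra].
Qed.

Lemma log2_1p_pos g : 0 < g -> 0 < log2 (1 + g).
Proof. intros Hg. apply Rdiv_lt_0_compat; [now apply ln_1p_pos | exact ln2_pos]. Qed.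

Lemma is_derive_dispersion x : -1 < x -> is_derive dispersion x (2 / (x + 1) ^ 3).
Proof. intros Hx. unfold dispersion. auto_derive; [apply Rgt_not_eq; nra | field; lra]. Qed.

Lemma is_derive_log2_1p x :
  -1 < x -> is_derive (fun y => log2 (1 + y)) x (/ ((1 + x) * ln 2)).
Proof.
  intros Hx. pose proof ln2_pos. unfold log2.
  auto_derive; [lra | field; lra].
Qed.

Lemma Wgap_0 c N : Wgap c N 0 = 0.
Proof.
  unfold Wgap, rate_gap, log2. rewrite dispersion_eq, Rplus_0_r, ln_1 by lra.
  replace (c ^ 2 * (0 * (0 + 2) / (0 + 1) ^ 2) + 4 * N * (0 / ln 2)) with 0
    by (pose proof ln2_pos; field; lra).
  replace (0 * (0 + 2) / (0 + 1) ^ 2) with 0 by field.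
  rewrite sqrt_0. ring.
Qed.

Lemma Wgap_continuity_pt c N g : -1 < g -> continuity_pt (Wgap c N) g.
Proof.
  intros Hg. apply continuity_pt_filterlim.
  assert (HV := is_derive_continuous _ _ _ (is_derive_dispersion g Hg)).
  assert (HL := is_derive_continuous _ _ _ (is_derive_log2_1p g Hg)).
  unfold Wgap, rate_gap.
  apply (continuous_minus (fun y => sqrt (c ^ 2 * dispersion y + 4 * N * log2 (1 + y)))
                          (fun y => c * sqrt (dispersion y))).
  - apply continuous_sqrt_comp.
    apply (continuous_plus (fun y => c ^ 2 * dispersion y) (fun y => 4 * N * log2 (1 + y))).
    + now apply (continuous_mult (fun _ => c ^ 2) dispersion); [apply continuous_const |].
    + now apply (continuous_mult (fun _ => 4 * N) (fun y => log2 (1 + y)));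
        [apply continuous_const |].
  - apply (continuous_mult (fun _ => c) (fun y => sqrt (dispersion y)));
      [apply continuous_const | now apply continuous_sqrt_comp].
Qed.

Lemma Wgap_increasing c N x y : 0 < N -> 0 < x -> x < y -> Wgap c N x < Wgap c N y.
Proof.
  intros HN Hx Hxy. pose proof ln2_pos.
  apply (incr_function (Wgap c N) 0 p_infty (fun z => rate_gap_slope c N
           (dispersion z) (log2 (1 + z)) (2 / (z + 1) ^ 3) (/ ((1 + z) * ln 2))));
    [| | exact Hx | exact Hxy | exact I]; intros z Hz _; simpl in Hz.
  - pose proof (dispersion_pos z Hz). pose proof (log2_1p_pos z Hz).
    apply (is_derive_rate_gap c N dispersion (fun y => log2 (1 + y)));
      [apply is_derive_dispersion; lra | apply is_derive_log2_1p; lra | lra | nra].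
  - pose proof (dispersion_pos z Hz) as HV.
    assert (Hdu : 0 < 2 / (z + 1) ^ 3) by (apply Rdiv_lt_0_compat; [lra | apply pow_lt; lra]).
    assert (Hdv : 0 < / ((1 + z) * ln 2)) by (apply Rinv_0_lt_compat; nra).
    apply rate_gap_slope_pos; auto using log2_1p_pos. intros _.
    assert (Hcurv : 0 <= 2 * / ((1 + z) * ln 2) * dispersion z
                         - 2 / (z + 1) ^ 3 * log2 (1 + z)).
    { replace (_ - _) with (2 * (z * (z + 2) - ln (1 + z)) / ((1 + z) ^ 3 * ln 2))
        by (unfold log2; rewrite dispersion_eq by lra; field; lra).
      pose proof (ln_1p_le z ltac:(lra)).
      apply Rle_mult_inv_pos; [nra | apply Rmult_lt_0_compat; [apply pow_lt |]; lra]. }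
    assert (0 <= c ^ 2 * (2 / (z + 1) ^ 3)) by (pose proof (pow2_ge_0 c); nra).
    assert (0 <= c ^ 2 * (2 / (z + 1) ^ 3) *
                 (2 * / ((1 + z) * ln 2) * dispersion z - 2 / (z + 1) ^ 3 * log2 (1 + z)))
      by now apply Rmult_le_pos.
    assert (0 < 4 * N * (/ ((1 + z) * ln 2)) ^ 2 * dispersion z)
      by (repeat apply Rmult_lt_0_compat; try apply pow_lt; lra).
    lra.
Qed.

Lemma Wgap_eq_sqrt_mul_Egap c N g : 0 < g -> Wgap c N g = sqrt g * Egap c N g.
Proof.
  intros Hg. unfold Wgap, Egap. rewrite <- rate_gap_scale by lra.
  f_equal; field; lra.
Qed.

Lemma is_derive_dispersion_div x :
  0 < x -> is_derive (fun y => dispersion y / y) x (- ((x + 3) / (x + 1) ^ 3)).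
Proof.
  intros Hx. unfold dispersion.
  auto_derive; [repeat split; apply Rgt_not_eq; nra | field; lra].
Qed.

Lemma is_derive_log2_1p_div x :
  0 < x -> is_derive (fun y => log2 (1 + y) / y) x
             (- (((1 + x) * ln (1 + x) - x) / (x ^ 2 * (1 + x) * ln 2))).
Proof.
  intros Hx. pose proof ln2_pos. unfold log2.
  auto_derive; [repeat split; [lra | apply Rgt_not_eq; lra] | field; lra].
Qed.

Lemma Egap_curvature_poly_pos x w : 0 < x -> x ^ 2 <= (2 + x) * w ->
  0 < 6 * (x + 2) * (1 + x) ^ 3 * w ^ 2 + x ^ 2 * (x + 3) * (x ^ 2 + 3 * x + 4) * w
      - (x + 3) ^ 2 * x ^ 4.
Proof.
  intros Hx Hw.
  (* With w = (x^2 + t) / (2 + x) and t >= 0, all coefficients become nonnegative. *)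
  set (t := (2 + x) * w - x ^ 2).
  assert (Ht : 0 <= t) by (unfold t; lra).
  assert (Hwt : w = (x ^ 2 + t) / (2 + x)) by (unfold t; field; lra).
  assert (Hexp : (2 + x) ^ 2 * (6 * (x + 2) * (1 + x) ^ 3 * w ^ 2
                   + x ^ 2 * (x + 3) * (x ^ 2 + 3 * x + 4) * w - (x + 3) ^ 2 * x ^ 4)
     = 2 * x ^ 5 * (x + 2) * (1 + x) * (3 * x + 5)
       + t * (12 * (x + 2) * (1 + x) ^ 3 * x ^ 2
              + x ^ 2 * (x + 3) * (x ^ 2 + 3 * x + 4) * (2 + x))
       + 6 * (x + 2) * (1 + x) ^ 3 * t ^ 2)
    by (rewrite Hwt; field; lra).
  assert (0 < 2 * x ^ 5 * (x + 2) * (1 + x) * (3 * x + 5))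
    by (repeat apply Rmult_lt_0_compat; try apply pow_lt; lra).
  assert (0 <= t * (12 * (x + 2) * (1 + x) ^ 3 * x ^ 2
                    + x ^ 2 * (x + 3) * (x ^ 2 + 3 * x + 4) * (2 + x))).
  { assert (0 < (1 + x) ^ 3) by (apply pow_lt; lra).
    assert (0 < x ^ 2 + 3 * x + 4) by nra.
    apply Rmult_le_pos; [exact Ht |].
    apply Rplus_le_le_0_compat; repeat apply Rmult_le_pos; try apply pow_le; lra. }
  assert (0 <= 6 * (x + 2) * (1 + x) ^ 3 * t ^ 2)
    by (repeat apply Rmult_le_pos; try apply pow_le; lra).
  assert (0 < (2 + x) ^ 2) by (apply pow_lt; lra).
  nra.
Qed.

Lemma ln_1p_excess_ge x : 0 <= x -> x ^ 2 <= (2 + x) * ((1 + x) * ln (1 + x) - x).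
Proof.
  intros Hx. pose proof (ln_1p_ge x Hx) as Hlow.
  apply (Rmult_le_compat_l (2 + x)) in Hlow; [| lra].
  replace ((2 + x) * (2 * x / (2 + x))) with (2 * x) in Hlow by (field; lra).
  nra.
Qed.

Lemma Egap_curvature_pos x : 0 < x ->
  let A := (x + 2) / (x + 1) ^ 2 in
  let B := log2 (1 + x) / x in
  let al := (x + 3) / (x + 1) ^ 3 in
  let be := ((1 + x) * ln (1 + x) - x) / (x ^ 2 * (1 + x) * ln 2) in
  0 < 6 * ln 2 * be ^ 2 * A + al * (2 * be * A - al * B).
Proof.
  intros Hx A B al be. pose proof ln2_pos.
  replace (6 * ln 2 * be ^ 2 * A + al * (2 * be * A - al * B))
    with ((6 * (x + 2) * (1 + x) ^ 3 * ((1 + x) * ln (1 + x) - x) ^ 2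
           + x ^ 2 * (x + 3) * (x ^ 2 + 3 * x + 4) * ((1 + x) * ln (1 + x) - x)
           - (x + 3) ^ 2 * x ^ 4)
          / (ln 2 * x ^ 4 * (1 + x) ^ 7))
    by (unfold A, B, al, be, log2; field; lra).
  apply Rdiv_lt_0_compat.
  - apply Egap_curvature_poly_pos, ln_1p_excess_ge; lra.
  - repeat apply Rmult_lt_0_compat; try apply pow_lt; lra.
Qed.

Lemma Egap_slope_pos c N x :
  0 < N -> (0 < c -> 3 * c ^ 2 * ln 2 <= 2 * N) -> 0 < x ->
  0 < rate_gap_slope c N (dispersion x / x) (log2 (1 + x) / x)
        ((x + 3) / (x + 1) ^ 3) (((1 + x) * ln (1 + x) - x) / (x ^ 2 * (1 + x) * ln 2)).
Proof.
  intros HN Hc Hx. pose proof ln2_pos.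
  assert (HA : dispersion x / x = (x + 2) / (x + 1) ^ 2)
    by (rewrite dispersion_eq by lra; field; lra).
  pose proof (ln_1p_excess_ge x ltac:(lra)) as Hw.
  pose proof (Egap_curvature_pos x Hx) as Hkey. cbv zeta in Hkey.
  rewrite HA.
  set (A := (x + 2) / (x + 1) ^ 2) in *; set (B := log2 (1 + x) / x) in *.
  set (al := (x + 3) / (x + 1) ^ 3) in *.
  set (be := ((1 + x) * ln (1 + x) - x) / (x ^ 2 * (1 + x) * ln 2)) in *.
  assert (HA0 : 0 < A) by (apply Rdiv_lt_0_compat; [| apply pow_lt]; lra).
  assert (Hal : 0 < al) by (apply Rdiv_lt_0_compat; [| apply pow_lt]; lra).
  assert (Hbe : 0 < be).
  { apply Rdiv_lt_0_compat; [nra |].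
    repeat apply Rmult_lt_0_compat; try apply pow_lt; lra. }
  apply rate_gap_slope_pos; try assumption.
  { apply Rdiv_lt_0_compat; [apply log2_1p_pos |]; lra. }
  intros Hc0. specialize (Hc Hc0).
  set (T := 2 * be * A - al * B) in *.
  assert (Hbe2 : 0 < 4 * N * be ^ 2 * A).
  { apply Rmult_lt_0_compat; [apply Rmult_lt_0_compat; [lra | apply pow_lt; lra] | exact HA0]. }
  destruct (Rle_or_lt 0 T) as [HT | HT].
  - assert (0 <= c ^ 2 * al * T)
      by (apply Rmult_le_pos; [apply Rmult_le_pos; [apply pow2_ge_0 | lra] | exact HT]).
    lra.
  - (* Here c^2 <= 2 N / (3 ln 2) reduces the claim to Egap_curvature_pos. *)
    assert (HaT : al * T < 0) by (apply Rmult_pos_neg; assumption).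
    assert (0 <= (2 * N - 3 * c ^ 2 * ln 2) * - (al * T)) by (apply Rmult_le_pos; lra).
    assert (0 < 2 * N * (6 * ln 2 * be ^ 2 * A + al * T)) by (apply Rmult_lt_0_compat; lra).
    assert (0 < (c ^ 2 * al * T + 4 * N * be ^ 2 * A) * (3 * ln 2)) by nra.
    nra.
Qed.

Lemma Egap_decreasing c N x y :
  0 < N -> (0 < c -> 3 * c ^ 2 * ln 2 <= 2 * N) -> 0 < x -> x < y ->
  Egap c N y < Egap c N x.
Proof.
  intros HN Hc Hx Hxy. pose proof ln2_pos.
  cut (- Egap c N x < - Egap c N y); [lra |].
  apply (incr_function (fun z => - Egap c N z) 0 p_infty (fun z => - rate_gap_slope c N
           (dispersion z / z) (log2 (1 + z) / z) (- ((z + 3) / (z + 1) ^ 3))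
           (- (((1 + z) * ln (1 + z) - z) / (z ^ 2 * (1 + z) * ln 2)))));
    [| | exact Hx | exact Hxy | exact I]; intros z Hz _; simpl in Hz.
  - apply (is_derive_opp (Egap c N)).
    assert (0 < dispersion z / z) by (apply Rdiv_lt_0_compat; [apply dispersion_pos |]; lra).
    assert (0 < log2 (1 + z) / z) by (apply Rdiv_lt_0_compat; [apply log2_1p_pos |]; lra).
    apply (is_derive_rate_gap c N (fun y => dispersion y / y) (fun y => log2 (1 + y) / y));
      [apply is_derive_dispersion_div | apply is_derive_log2_1p_div | | nra]; lra.
  - rewrite rate_gap_slope_opp, Ropp_involutive. now apply Egap_slope_pos.
Qed.

Lemma Ffun_eq0_iff eps N m g : 0 < N -> 0 < m -> 0 < g ->
  Ffun eps N m g = 0 <-> sqrt m * Wgap (Qinv eps / ln 2) N g = 2 * N.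
Proof.
  intros HN Hm Hg. pose proof ln2_pos.
  assert (Hs : 0 < sqrt m) by (apply sqrt_lt_R0; lra).
  assert (Hs2 : sqrt m * sqrt m = m) by (apply sqrt_sqrt; lra).
  replace (Ffun eps N m g) with (Qinv eps / ln 2 * sqrt (dispersion g) / sqrt m
                                 - log2 (1 + g) + N / (sqrt m * sqrt m)).
  - apply rate_gap_root_iff; auto using dispersion_pos, log2_1p_pos.
  - unfold Ffun. fold (dispersion g).
    rewrite sqrt_mult_alt, sqrt_inv, Hs2 by (left; apply Rinv_0_lt_compat; lra).
    field. lra.
Qed.

Lemma Ffun_at_0 eps N m : Ffun eps N m 0 = N / m.
Proof.
  unfold Ffun, log2.
  replace (1 - / (0 + 1) ^ 2) with 0 by field.
  rewrite Rmult_0_r, sqrt_0, Rplus_0_r, ln_1. unfold Rdiv. ring.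
Qed.

Lemma Ffun_root_antitone eps N m m' g g' :
  0 < N -> 0 < m -> m <= m' -> 0 < g -> 0 < g' ->
  Ffun eps N m g = 0 -> Ffun eps N m' g' = 0 -> g' <= g.
Proof.
  intros HN Hm Hmm' Hg Hg' Hr Hr'.
  apply Ffun_eq0_iff in Hr, Hr'; try lra.
  destruct (Rle_or_lt g' g) as [Hle | Hlt]; [exact Hle | exfalso].
  set (c := Qinv eps / ln 2) in *.
  pose proof (Wgap_increasing c N g g' HN Hg Hlt).
  assert (Hs : 0 < sqrt m) by (apply sqrt_lt_R0; lra).
  pose proof (sqrt_le_1_alt m m' Hmm').
  assert (0 < Wgap c N g) by nra.
  assert (sqrt m * Wgap c N g < sqrt m * Wgap c N g') by (apply Rmult_lt_compat_l; lra).
  assert (sqrt m * Wgap c N g' <= sqrt m' * Wgap c N g') by (apply Rmult_le_compat_r; lra).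
  lra.
Qed.

Lemma Ffun_root_mul_le eps N m m' g g' :
  0 < N -> (0 < Qinv eps / ln 2 -> 3 * (Qinv eps / ln 2) ^ 2 * ln 2 <= 2 * N) ->
  0 < m -> m <= m' -> 0 < g -> 0 < g' ->
  Ffun eps N m g = 0 -> Ffun eps N m' g' = 0 -> m' * g' <= m * g.
Proof.
  intros HN Hc Hm Hmm' Hg Hg' Hr Hr'.
  pose proof (Ffun_root_antitone eps N m m' g g' HN Hm Hmm' Hg Hg' Hr Hr') as Hle.
  apply Ffun_eq0_iff in Hr, Hr'; try lra.
  set (c := Qinv eps / ln 2) in *.
  rewrite Wgap_eq_sqrt_mul_Egap in Hr, Hr' by lra.
  assert (HE : Egap c N g <= Egap c N g').
  { destruct Hle as [Hlt | ->]; [left; now apply Egap_decreasing | lra]. }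
  assert (0 < sqrt m * sqrt g) by (apply Rmult_lt_0_compat; apply sqrt_lt_R0; lra).
  assert (0 < sqrt m' * sqrt g') by (apply Rmult_lt_0_compat; apply sqrt_lt_R0; lra).
  rewrite <- Rmult_assoc in Hr, Hr'.
  assert (0 < Egap c N g) by nra.
  assert (Hsq : sqrt m' * sqrt g' <= sqrt m * sqrt g).
  { destruct (Rle_or_lt (sqrt m' * sqrt g') (sqrt m * sqrt g)) as [Hle' | Hlt];
      [exact Hle' |].
    assert (sqrt m * sqrt g * Egap c N g' < sqrt m' * sqrt g' * Egap c N g')
      by (apply Rmult_lt_compat_r; lra).
    assert (sqrt m * sqrt g * Egap c N g <= sqrt m * sqrt g * Egap c N g')
      by (apply Rmult_le_compat_l; lra).
    lra. }
  rewrite <- !sqrt_mult_alt in Hsq by lra.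
  apply sqrt_le_0 in Hsq; nra.
Qed.

Lemma Gam_spec eps N m D g : 0 < N -> 0 < m -> m <= D -> 0 < g -> Ffun eps N m g = 0 ->
  0 < Gam eps N D /\ Ffun eps N D (Gam eps N D) = 0.
Proof.
  intros HN Hm HmD Hg HF.
  apply (epsilon_spec (inhabits 0) (fun g => 0 < g /\ Ffun eps N D g = 0)).
  apply Ffun_eq0_iff in HF; try lra.
  set (c := Qinv eps / ln 2) in *.
  assert (HsD : 0 < sqrt D) by (apply sqrt_lt_R0; lra).
  set (y := 2 * N / sqrt D).
  assert (Hy : 0 < y) by (apply Rdiv_lt_0_compat; lra).
  assert (Hyg : y <= Wgap c N g).
  { unfold y. apply (Rmult_le_reg_l (sqrt D)); [exact HsD |].
    replace (sqrt D * (2 * N / sqrt D)) with (2 * N) by (field; lra).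
    pose proof (sqrt_le_1_alt m D HmD). assert (0 < sqrt m) by (apply sqrt_lt_R0; lra).
    nra. }
  destruct (Ranalysis5.IVT_interv (fun z => Wgap c N z - y) 0 (g + 1)) as [z [Hz Hyz]].
  - intros a Ha. apply continuity_pt_minus; [apply Wgap_continuity_pt; lra |].
    now apply continuity_pt_const.
  - lra.
  - rewrite Wgap_0. lra.
  - pose proof (Wgap_increasing c N g (g + 1) HN Hg ltac:(lra)). lra.
  - assert (Hz0 : z <> 0) by (intros ->; rewrite Wgap_0 in Hyz; lra).
    exists z. split; [lra |].
    apply Ffun_eq0_iff; try lra. fold c.
    replace (Wgap c N z) with y by lra. unfold y. field. lra.
Qed.

Lemma threshold_sq_bound q N :
  0 < N -> q / sqrt N <= 2 * sqrt (ln 2) / (4 - sqrt 2) ->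
  0 < q / ln 2 -> 3 * (q / ln 2) ^ 2 * ln 2 <= 2 * N.
Proof.
  intros HN Hq Hc. pose proof ln2_pos.
  assert (Hq0 : 0 < q) by (replace q with (q / ln 2 * ln 2) by (field; lra); nra).
  assert (Hr : 0 < sqrt 2) by (apply sqrt_lt_R0; lra).
  assert (Hr2 : sqrt 2 * sqrt 2 = 2) by (apply sqrt_sqrt; lra).
  assert (HsN : 0 < sqrt N) by (apply sqrt_lt_R0; lra).
  assert (HsN2 : sqrt N * sqrt N = N) by (apply sqrt_sqrt; lra).
  assert (Hsl : 0 < sqrt (ln 2)) by (apply sqrt_lt_R0; lra).
  assert (Hsl2 : sqrt (ln 2) * sqrt (ln 2) = ln 2) by (apply sqrt_sqrt; lra).
  assert (Hlin : q * (4 - sqrt 2) <= 2 * sqrt (ln 2) * sqrt N).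
  { apply (Rmult_le_compat_r ((4 - sqrt 2) * sqrt N)) in Hq; [| nra].
    replace (q / sqrt N * ((4 - sqrt 2) * sqrt N)) with (q * (4 - sqrt 2)) in Hq
      by (field; nra).
    replace (2 * sqrt (ln 2) / (4 - sqrt 2) * ((4 - sqrt 2) * sqrt N))
      with (2 * sqrt (ln 2) * sqrt N) in Hq by (field; nra).
    exact Hq. }
  (* The threshold is used only through (4 - sqrt 2)^2 >= 6. *)
  assert (Hsq : (q * (4 - sqrt 2)) ^ 2 <= 4 * ln 2 * N).
  { apply Rle_trans with ((2 * sqrt (ln 2) * sqrt N) ^ 2).
    - apply pow_incr. split; [nra | exact Hlin].
    - right. replace ((2 * sqrt (ln 2) * sqrt N) ^ 2)
        with (4 * (sqrt (ln 2) * sqrt (ln 2)) * (sqrt N * sqrt N)) by ring.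
      rewrite Hsl2, HsN2. ring. }
  replace (3 * (q / ln 2) ^ 2 * ln 2) with (3 * q ^ 2 / ln 2) by (field; lra).
  apply (Rmult_le_reg_r (ln 2)); [lra |].
  replace (3 * q ^ 2 / ln 2 * ln 2) with (3 * q ^ 2) by (field; lra).
  nra.
Qed.

Definition sinr_power (a1 a2 g1 g2 : R) : R :=
  (g1 * a2 + g1 * g2 * a1) / (a1 * a2 * (1 - g1 * g2)).

Lemma sinr_mul_lt_1 a1 a2 p1 p2 : 0 < a1 -> 0 < a2 -> 0 <= p1 -> 0 <= p2 ->
  p1 * a1 / (p2 * a1 + 1) * (p2 * a2 / (p1 * a2 + 1)) < 1.
Proof.
  intros Ha1 Ha2 Hp1 Hp2.
  assert (Hd1 : 0 < p2 * a1 + 1) by nra.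
  assert (Hd2 : 0 < p1 * a2 + 1) by nra.
  assert (Hd : 0 < (p2 * a1 + 1) * (p1 * a2 + 1)) by now apply Rmult_lt_0_compat.
  replace (p1 * a1 / (p2 * a1 + 1) * (p2 * a2 / (p1 * a2 + 1)))
    with (p1 * a1 * (p2 * a2) / ((p2 * a1 + 1) * (p1 * a2 + 1)))
    by (field; lra).
  apply (Rmult_lt_reg_r ((p2 * a1 + 1) * (p1 * a2 + 1))); [exact Hd |].
  unfold Rdiv. rewrite Rmult_assoc, Rinv_l by lra. nra.
Qed.

Lemma sinr_power_inv a1 a2 p1 p2 : 0 < a1 -> 0 < a2 -> 0 <= p1 -> 0 <= p2 ->
  p1 = sinr_power a1 a2 (p1 * a1 / (p2 * a1 + 1)) (p2 * a2 / (p1 * a2 + 1)).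
Proof.
  intros Ha1 Ha2 Hp1 Hp2.
  unfold sinr_power. field. repeat split; apply Rgt_not_eq; nra.
Qed.

Lemma sinr_power_sinr a1 a2 g1 g2 :
  0 < a1 -> 0 < a2 -> 0 <= g1 -> 0 <= g2 -> g1 * g2 < 1 ->
  g1 = sinr_power a1 a2 g1 g2 * a1 / (sinr_power a2 a1 g2 g1 * a1 + 1).
Proof.
  intros Ha1 Ha2 Hg1 Hg2 Hg12.
  unfold sinr_power. field. repeat split; apply Rgt_not_eq; nra.
Qed.

Lemma sinr_power_nonneg a1 a2 g1 g2 :
  0 < a1 -> 0 < a2 -> 0 <= g1 -> 0 <= g2 -> g1 * g2 < 1 ->
  0 <= sinr_power a1 a2 g1 g2.
Proof.
  intros Ha1 Ha2 Hg1 Hg2 Hg12. unfold sinr_power.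
  apply Rle_mult_inv_pos.
  - apply Rplus_le_le_0_compat; repeat apply Rmult_le_pos; lra.
  - apply Rmult_lt_0_compat; [nra | lra].
Qed.

Lemma mul_sinr_power_le a1 a2 t t' g1 g2 g1' g2' :
  0 < a1 -> 0 < a2 -> 0 <= t * g1 <= t' * g1' -> 0 <= g1 <= g1' -> 0 <= g2 <= g2' ->
  g1' * g2' < 1 -> t * sinr_power a1 a2 g1 g2 <= t' * sinr_power a1 a2 g1' g2'.
Proof.
  intros Ha1 Ha2 Ht Hg1 Hg2 Hg12.
  assert (Hprod : g1 * g2 <= g1' * g2') by (apply Rmult_le_compat; lra).
  assert (Hd : 0 < a1 * a2 * (1 - g1' * g2')) by (apply Rmult_lt_0_compat; nra).
  unfold sinr_power.
  replace (t * ((g1 * a2 + g1 * g2 * a1) / (a1 * a2 * (1 - g1 * g2))))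
    with (t * g1 * (a2 + g2 * a1) * / (a1 * a2 * (1 - g1 * g2))) by (field; nra).
  replace (t' * ((g1' * a2 + g1' * g2' * a1) / (a1 * a2 * (1 - g1' * g2'))))
    with (t' * g1' * (a2 + g2' * a1) * / (a1 * a2 * (1 - g1' * g2'))) by (field; nra).
  apply Rmult_le_compat.
  - apply Rmult_le_pos; nra.
  - left. apply Rinv_0_lt_compat. apply Rmult_lt_0_compat; nra.
  - apply Rmult_le_compat; nra.
  - apply Rinv_le_contravar; [exact Hd | nra].
Qed.

Lemma feasible_swap a1 a2 D1 D2 mhat Pmax N1 N2 eps1 eps2 m1 m2 p1 p2 g1 g2 :
  feasible a1 a2 D1 D2 mhat Pmax N1 N2 eps1 eps2 m1 m2 p1 p2 g1 g2 ->
  feasible a2 a1 D2 D1 mhat Pmax N2 N1 eps2 eps1 m2 m1 p2 p1 g2 g1.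
Proof.
  unfold feasible. intros (? & ? & ? & ? & ? & ? & ? & ? & ?).
  repeat split; auto; lra.
Qed.

Lemma feasible_user1_bounds a1 a2 D1 D2 mhat Pmax N1 N2 eps1 eps2 m1 m2 p1 p2 g1 g2 :
  0 < a1 -> 0 < a2 -> 0 < mhat -> 0 < N1 ->
  (0 < Qinv eps1 / ln 2 -> 3 * (Qinv eps1 / ln 2) ^ 2 * ln 2 <= 2 * N1) ->
  feasible a1 a2 D1 D2 mhat Pmax N1 N2 eps1 eps2 m1 m2 p1 p2 g1 g2 ->
  0 < Gam eps1 N1 D1 /\ Ffun eps1 N1 D1 (Gam eps1 N1 D1) = 0 /\
  Gam eps1 N1 D1 <= g1 /\ D1 * Gam eps1 N1 D1 <= m1 * g1 /\
  g1 * g2 < 1 /\ p1 = sinr_power a1 a2 g1 g2.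
Proof.
  intros Ha1 Ha2 Hmhat HN1 Hc1 (HF1 & _ & Hm1 & _ & Hp1 & Hp2 & _ & Hg1 & Hg2).
  assert (Hg1pos : 0 < g1).
  { assert (0 <= g1) by (rewrite Hg1; apply Rle_mult_inv_pos; nra).
    destruct H as [H | <-]; [exact H |].
    rewrite Ffun_at_0 in HF1. exfalso.
    assert (0 < N1 / m1) by (apply Rdiv_lt_0_compat; lra). lra. }
  destruct (Gam_spec eps1 N1 m1 D1 g1 HN1 ltac:(lra) ltac:(lra) Hg1pos HF1) as [HG HFG].
  repeat split; try assumption.
  - apply (Ffun_root_antitone eps1 N1 m1 D1); lra || assumption.
  - apply (Ffun_root_mul_le eps1 N1 m1 D1); lra || assumption.
  - rewrite Hg1, Hg2. now apply sinr_mul_lt_1.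
  - rewrite Hg1, Hg2. now apply sinr_power_inv.
Qed.

Section TwoUsers.

Variables a1 a2 D1 D2 mhat Pmax N1 N2 eps1 eps2 : R.
Hypotheses (Ha1 : 0 < a1) (Ha2 : 0 < a2) (Hmhat : 0 < mhat) (HN1 : 0 < N1) (HN2 : 0 < N2).
Hypothesis Hc1 : 0 < Qinv eps1 / ln 2 -> 3 * (Qinv eps1 / ln 2) ^ 2 * ln 2 <= 2 * N1.
Hypothesis Hc2 : 0 < Qinv eps2 / ln 2 -> 3 * (Qinv eps2 / ln 2) ^ 2 * ln 2 <= 2 * N2.

Lemma Gam_point_feasible m1 m2 p1 p2 g1 g2 :
  feasible a1 a2 D1 D2 mhat Pmax N1 N2 eps1 eps2 m1 m2 p1 p2 g1 g2 ->
  feasible a1 a2 D1 D2 mhat Pmax N1 N2 eps1 eps2 D1 D2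
    (sinr_power a1 a2 (Gam eps1 N1 D1) (Gam eps2 N2 D2))
    (sinr_power a2 a1 (Gam eps2 N2 D2) (Gam eps1 N1 D1))
    (Gam eps1 N1 D1) (Gam eps2 N2 D2).
Proof.
  intros Hf.
  destruct (feasible_user1_bounds _ _ _ _ _ _ _ _ _ _ _ _ _ _ _ _ Ha1 Ha2 Hmhat HN1 Hc1 Hf)
    as (G1 & F1 & L1 & _ & Hlt & P1).
  destruct (feasible_user1_bounds _ _ _ _ _ _ _ _ _ _ _ _ _ _ _ _ Ha2 Ha1 Hmhat HN2 Hc2
              (feasible_swap _ _ _ _ _ _ _ _ _ _ _ _ _ _ _ _ Hf))
    as (G2 & F2 & L2 & _ & _ & P2).
  destruct Hf as (_ & _ & Hm1 & Hm2 & _ & _ & HP & _).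
  set (g1s := Gam eps1 N1 D1) in *; set (g2s := Gam eps2 N2 D2) in *.
  assert (Hlts : g1s * g2s < 1)
    by (apply Rle_lt_trans with (g1 * g2); [apply Rmult_le_compat |]; lra).
  assert (sinr_power a1 a2 g1s g2s <= p1).
  { pose proof (mul_sinr_power_le a1 a2 1 1 g1s g2s g1 g2). rewrite P1. lra. }
  assert (sinr_power a2 a1 g2s g1s <= p2).
  { pose proof (mul_sinr_power_le a2 a1 1 1 g2s g1s g2 g1). rewrite P2. lra. }
  unfold feasible. repeat apply conj; try assumption; try lra.
  - apply sinr_power_nonneg; lra.
  - apply sinr_power_nonneg; lra.
  - apply sinr_power_sinr; lra.
  - apply sinr_power_sinr; lra.
Qed.

Lemma Gam_point_optimal m1 m2 p1 p2 g1 g2 :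
  feasible a1 a2 D1 D2 mhat Pmax N1 N2 eps1 eps2 m1 m2 p1 p2 g1 g2 ->
  objective D1 D2 (sinr_power a1 a2 (Gam eps1 N1 D1) (Gam eps2 N2 D2))
    (sinr_power a2 a1 (Gam eps2 N2 D2) (Gam eps1 N1 D1)) <= objective m1 m2 p1 p2.
Proof.
  intros Hf.
  destruct (feasible_user1_bounds _ _ _ _ _ _ _ _ _ _ _ _ _ _ _ _ Ha1 Ha2 Hmhat HN1 Hc1 Hf)
    as (G1 & _ & L1 & M1 & Hlt & ->).
  destruct (feasible_user1_bounds _ _ _ _ _ _ _ _ _ _ _ _ _ _ _ _ Ha2 Ha1 Hmhat HN2 Hc2
              (feasible_swap _ _ _ _ _ _ _ _ _ _ _ _ _ _ _ _ Hf))
    as (G2 & _ & L2 & M2 & _ & ->).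
  destruct Hf as (_ & _ & Hm1 & Hm2 & _).
  unfold objective.
  pose proof (mul_sinr_power_le a1 a2 D1 m1 (Gam eps1 N1 D1) (Gam eps2 N2 D2) g1 g2).
  pose proof (mul_sinr_power_le a2 a1 D2 m2 (Gam eps2 N2 D2) (Gam eps1 N1 D1) g2 g1).
  assert (0 <= D1 * Gam eps1 N1 D1) by (apply Rmult_le_pos; lra).
  assert (0 <= D2 * Gam eps2 N2 D2) by (apply Rmult_le_pos; lra).
  lra.
Qed.

End TwoUsers.

Theorem corollary1 (h1 h2 : C) (D1 D2 mhat Pmax N1 N2 eps1 eps2 : R) :
  h1 <> 0%C -> h2 <> 0%C -> Cmod h1 > Cmod h2 ->
  D1 < D2 -> 0 < mhat -> 0 < Pmax -> 0 < N1 -> 0 < N2 ->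
  0 < eps1 < 1 -> 0 < eps2 < 1 ->
  Qinv eps1 / sqrt N1 <= 2 * sqrt (ln 2) / (4 - sqrt 2) ->
  Qinv eps2 / sqrt N2 <= 2 * sqrt (ln 2) / (4 - sqrt 2) ->
  (exists m1 m2 p1 p2 g1 g2,
     feasible (Cmod h1 ^ 2) (Cmod h2 ^ 2) D1 D2 mhat Pmax N1 N2 eps1 eps2
       m1 m2 p1 p2 g1 g2) ->
  let a1 := Cmod h1 ^ 2 in
  let a2 := Cmod h2 ^ 2 in
  let g1s := Gam eps1 N1 D1 in
  let g2s := Gam eps2 N2 D2 in
  let p1s := (g1s * a2 + g1s * g2s * a1) / (a1 * a2 * (1 - g1s * g2s)) in
  let p2s := (g2s * a1 + g1s * g2s * a2) / (a1 * a2 * (1 - g1s * g2s)) in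
  feasible a1 a2 D1 D2 mhat Pmax N1 N2 eps1 eps2 D1 D2 p1s p2s g1s g2s /\
  (forall m1 m2 p1 p2 g1 g2,
     feasible a1 a2 D1 D2 mhat Pmax N1 N2 eps1 eps2 m1 m2 p1 p2 g1 g2 ->
     objective D1 D2 p1s p2s <= objective m1 m2 p1 p2).
Proof.
  intros Hh1 Hh2 _ _ Hmhat _ HN1 HN2 _ _ Hq1 Hq2 [m1 [m2 [p1 [p2 [g1 [g2 Hf]]]]]]
    a1 a2 g1s g2s p1s p2s.
  assert (Ha1 : 0 < a1) by (apply pow_lt, Cmod_gt_0, Hh1).
  assert (Ha2 : 0 < a2) by (apply pow_lt, Cmod_gt_0, Hh2).
  pose proof (threshold_sq_bound _ _ HN1 Hq1) as Hc1.
  pose proof (threshold_sq_bound _ _ HN2 Hq2) as Hc2.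
  assert (Hp2s : p2s = sinr_power a2 a1 g2s g1s) by (unfold p2s, sinr_power; f_equal; ring).
  change p1s with (sinr_power a1 a2 g1s g2s). rewrite Hp2s.
  split.
  - exact (Gam_point_feasible _ _ _ _ _ _ _ _ _ _ Ha1 Ha2 Hmhat HN1 HN2 Hc1 Hc2
             _ _ _ _ _ _ Hf).
  - exact (Gam_point_optimal _ _ _ _ _ _ _ _ _ _ Ha1 Ha2 Hmhat HN1 HN2 Hc1 Hc2).
Qed.
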